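(* Let $G_1,\ldots,G_k$ be connected graphs whose vertex sets are pairwise disjoint except that a vertex $a$ belongs to every $G_i$. Suppose that no $G_i$ is $a$-outer geometric 1-planar and that each $G_i$ has at most $m$ edges. If $k\ge m+2$, then $\bigcup_{i=1}^k G_i$ is not geometric 1-planar.
   Context: Graphs are finite and simple. An embedding of a graph maps vertices to distinct points of $\mathbb{R}^2$ and each edge to a Jordan arc between its endpoints, such that edges intersect only at common endpoints or in proper crossings. An embedding is 1-planar if every edge is crossed at most once, and geometric if every edge is a straight-line segment; a graph is geometric 1-planar if it has a geometric 1-planar embedding. The outer region of an embedding is the unbounded connected component of $\mathbb{R}^2$ minus the union of all edge arcs. $G$ is $a$-outer geometric 1-planar if it has a geometric 1-planar embedding in which $a$ lies on the outer region. *)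

From HB Require Import structures.
From mathcomp Require Import all_boot all_order all_algebra.
From mathcomp Require Import all_classical all_reals all_analysis.
From mathcomp Require Import Rstruct Rstruct_topology.
Set Implicit Arguments. Unset Strict Implicit. Unset Printing Implicit Defensive.
Import Order.TTheory GRing.Theory Num.Theory.
Local Open Scope ring_scope.

Notation RR := Rdefinitions.R.
Definition point := (RR * RR)%type.

Record sgraph (T : finType) := SGraph { gV : {set T}; gE : rel T }.

Definition simple_graph (T : finType) (G : sgraph T) : Prop :=
  [/\ symmetric (gE G), irreflexive (gE G) &
      forall x y, gE G x y -> x \in gV G /\ y \in gV G].

Definition edges (T : finType) (G : sgraph T) : {set {set T}} :=
  [set [set x; y] | x in gV G, y in gV G & gE G x y].

Definition gconnected (T : finType) (G : sgraph T) : Prop :=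
  forall x y, x \in gV G -> y \in gV G -> connect (gE G) x y.

Definition gunion (T : finType) (k : nat) (Gs : 'I_k -> sgraph T) : sgraph T :=
  SGraph (\bigcup_(i < k) gV (Gs i)) (fun x y => [exists i, gE (Gs i) x y]).

Definition seg (P Q : point) : set point :=
  [set X | exists2 t : RR, 0 <= t <= 1 &
     X = (P.1 + t * (Q.1 - P.1), P.2 + t * (Q.2 - P.2))]%classic.
Definition oseg (P Q : point) : set point :=
  [set X | exists2 t : RR, 0 < t < 1 &
     X = (P.1 + t * (Q.1 - P.1), P.2 + t * (Q.2 - P.2))]%classic.

Section Embedding.
Variables (T : finType) (G : sgraph T) (p : T -> point).

Definition crossing (u v x y : T) : Prop :=
  [disjoint [set u; v] & [set x; y]] /\
  exists z0, ((seg (p u) (p v) `&` seg (p x) (p y)) = [set z0])%classic /\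
             oseg (p u) (p v) z0 /\ oseg (p x) (p y) z0.

Definition geo_embedding : Prop :=
  [/\ {in gV G &, injective p},
      (forall u v w, gE G u v -> w \in gV G -> ~ oseg (p u) (p v) (p w)) &
      (forall u v x y, gE G u v -> gE G x y -> [set u; v] != [set x; y] ->
         forall z, seg (p u) (p v) z -> seg (p x) (p y) z ->
           (exists2 w, w \in [set u; v] :&: [set x; y] & z = p w)
           \/ crossing u v x y)].

Definition one_planar_emb : Prop :=
  forall u v x y x' y', gE G u v -> gE G x y -> gE G x' y' ->
    crossing u v x y -> crossing u v x' y' -> [set x; y] = [set x'; y'].

Definition geo_1planar_emb : Prop := geo_embedding /\ one_planar_emb.

Definition drawing : set point :=
  [set z | exists u v, gE G u v /\ seg (p u) (p v) z]%classic.

Definition unbounded (C : set point) : Prop :=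
  forall M : RR, exists2 z, C z & M < Num.max `|z.1| `|z.2|.

Definition on_outer_region (a : T) : Prop :=
  exists z, (~` drawing)%classic z /\
    unbounded (connected_component (~` drawing)%classic z) /\
    closure (connected_component (~` drawing)%classic z) (p a).
End Embedding.

Definition geometric_1planar (T : finType) (G : sgraph T) : Prop :=
  exists p : T -> point, geo_1planar_emb G p.

Definition outer_geometric_1planar (T : finType) (G : sgraph T) (a : T) : Prop :=
  exists p : T -> point, geo_1planar_emb G p /\ on_outer_region G p a.

(* Let w be a rightmost vertex in a geometric 1-planar drawing of the union;
   the horizontal ray leaving w to the right meets no edge.  If w = a, this ray
   shows that a is on the outer region of every G_i.  Otherwise w lies in some
   G_i.  Two other graphs G_j, G_j' cannot cross the same edge of G_i: by
   1-planarity the two crossing edges would coincide and so have both ends in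
   G_j and G_j', i.e. both ends equal to a.  Hence at most m <= k - 2 of the
   other graphs cross G_i, and some G_j is not crossed by G_i at all.  A walk in
   G_i from w to a then avoids the drawing of G_j except at a itself, so a lies
   in the closure of the unbounded face of G_j containing the ray. *)

From Pilot Require Import Defs.
From HB Require Import structures.
From mathcomp Require Import all_boot all_order all_algebra.
From mathcomp Require Import all_classical all_reals all_analysis.
From mathcomp Require Import Rstruct Rstruct_topology.
From mathcomp.algebra_tactics Require Import ring lra.
From mathcomp Require Import zify.

Set Implicit Arguments. Unset Strict Implicit. Unset Printing Implicit Defensive.
Import Order.TTheory GRing.Theory Num.Theory.
Local Open Scope ring_scope.

Section Segments.
Local Open Scope classical_set_scope.

Definition lin (P Q : Defs.point) (t : RR) : Defs.point :=
  (P.1 + t * (Q.1 - P.1), P.2 + t * (Q.2 - P.2)).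

Definition east (P : Defs.point) : Defs.point := (P.1 + 1, P.2).

Lemma lin0 P Q : lin P Q 0 = P.
Proof. by case: P => x y; rewrite /lin !mul0r !addr0. Qed.

Lemma lin1 P Q : lin P Q 1 = Q.
Proof. by case: P => x y; case: Q => u v; rewrite /lin !mul1r /= !subrKC. Qed.

Lemma lin_lin P Q s1 s2 u :
  lin (lin P Q s1) (lin P Q s2) u = lin P Q (s1 + u * (s2 - s1)).
Proof. by rewrite /lin /=; congr (_, _); ring. Qed.

Lemma seg_lin P Q t : 0 <= t <= 1 -> seg P Q (lin P Q t).
Proof. by exists t. Qed.

Lemma seg_sym P Q : seg P Q = seg Q P.
Proof.
by apply/seteqP; split => z [t /andP[t0 t1] ->]; exists (1 - t);
  [apply/andP; split; lra | congr (_, _); ring | apply/andP; split; lra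
  | congr (_, _); ring].
Qed.

Lemma oseg_sym P Q : oseg P Q = oseg Q P.
Proof.
by apply/seteqP; split => z [t /andP[t0 t1] ->]; exists (1 - t);
  [apply/andP; split; lra | congr (_, _); ring | apply/andP; split; lra
  | congr (_, _); ring].
Qed.

Lemma seg_oseg P Q z : seg P Q z -> [\/ z = P, z = Q | oseg P Q z].
Proof.
case=> t /andP[]; rewrite le_eqVlt => /orP[/eqP<- _ ->|t0].
  by apply: Or31; rewrite -/(lin P Q 0) lin0.
rewrite le_eqVlt => /orP[/eqP-> ->|t1 ->]; first by apply: Or32; rewrite -/(lin P Q 1) lin1.
by apply: Or33; exists t; rewrite ?t0.
Qed.

Lemma lin_fixed P Q t : t != 0 -> lin P Q t = P -> Q = P.
Proof.
case: P Q => [x1 y1] [x2 y2] t0 [] /= ex ey.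
have /eqP : t * (x2 - x1) = 0 by lra.
have /eqP : t * (y2 - y1) = 0 by lra.
by rewrite !mulf_eq0 (negbTE t0) !subr_eq0 => /eqP-> /eqP->.
Qed.

Lemma lin_continuous P Q : continuous (lin P Q).
Proof.
have affine (c d : RR) : continuous (fun t : RR => c + t * d).
  move=> t; apply: (@cvgD RR RR^o _ _ _ (fun=> c) (fun t => t * d)).
    exact: cvg_cst.
  exact: cvgMr_tmp cvg_id.
by move=> t; exact: (cvg_pair (affine _ _ t) (affine _ _ t)).
Qed.

Lemma connected_component_segment (A : set Defs.point) P Q :
  (forall t, 0 <= t <= 1 -> A (lin P Q t)) -> connected_component A P Q.
Proof.
move=> AQ; exists (lin P Q @` `[0, 1]); last first.
  by exists 1; [rewrite /= in_itv /= lexx ler01 | exact: lin1].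
split.
- by exists 0; [rewrite /= in_itv /= lexx ler01 | exact: lin0].
- by move=> _ [t t01 <-]; apply: AQ; move: t01; rewrite /= in_itv.
- apply: connected_continuous_connected; first exact: segment_connected.
  by apply: continuous_subspaceT; exact: lin_continuous.
Qed.

Lemma connected_component_subsegment (A : set Defs.point) P Q s1 s2 : s1 <= s2 ->
  (forall t, s1 <= t <= s2 -> A (lin P Q t)) ->
  connected_component A (lin P Q s1) (lin P Q s2).
Proof.
move=> s12 AQ; apply: connected_component_segment => u /andP[u0 u1].
by rewrite lin_lin; apply: AQ; apply/andP; split; nra.
Qed.

Lemma closure_lin0 (C : set Defs.point) P Q :
  (forall t, 0 < t <= 1 -> C (lin P Q t)) -> closure C P.
Proof.
move=> CQ B; rewrite -{1}(lin0 P Q) => /lin_continuous linB.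
have : \forall t \near 0^'+, (lin P Q @^-1` B) t /\ 0 < t <= 1.
  near=> t; split; last (apply/andP; split).
  - by near: t; apply: cvg_within.
  - by near: t; exact: nbhs_right_gt.
  - by near: t; exact: nbhs_right_le.
move=> /filter_ex [t [Bt t01]].
by exists (lin P Q t); split => //; apply: CQ.
Unshelve. all: by end_near.
Qed.

Lemma closure_component_segment (A : set Defs.point) P Q :
  (forall t, 0 < t <= 1 -> A (lin P Q t)) ->
  closure (connected_component A Q) P.
Proof.
move=> AQ; apply: closure_lin0 => t /andP[t0 t1].
apply: connected_component_sym; rewrite -[X in connected_component _ _ X](lin1 P Q).
apply: connected_component_subsegment => // u /andP[tu u1].
by apply: AQ; rewrite u1 (lt_le_trans t0 tu).
Qed.

Lemma unbounded_component_east (A : set Defs.point) P s :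
  (forall t, s <= t -> A (lin P (east P) t)) ->
  unbounded (connected_component A (lin P (east P) s)).
Proof.
move=> AE M; pose t := `|M| + `|P.1| + `|s| + 1.
have st : s <= t by have := ler_norm s; have := normr_ge0 M;
  have := normr_ge0 P.1; rewrite /t; lra.
exists (lin P (east P) t).
  by apply: connected_component_subsegment => // u /andP[su _]; exact: AE.
apply: (@lt_le_trans _ _ `|(lin P (east P) t).1|); last by rewrite le_max lexx.
apply: (lt_le_trans _ (ler_norm _)).
rewrite /= /t; have := ler_norm M; have := normr_ge0 s.
have : - P.1 <= `|P.1| by rewrite -normrN ler_norm.
lra.
Qed.
End Segments.

Lemma set2_eq (T : finType) (x y x' y' : T) : [set x; y] = [set x'; y'] ->
  x' = x /\ y' = y \/ x' = y /\ y' = x.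
Proof.
move=> xyE; have /set2P[] : x' \in [set x; y] by rewrite xyE set21.
all: have /set2P[] : y' \in [set x; y] by rewrite xyE set22.
all: move=> y'E x'E; subst x' y'; auto.
  have /set1P -> : y \in [set x] by rewrite -[[set x]]finset.setUid -xyE set22.
  by left.
have /set1P -> : x \in [set y] by rewrite -[[set y]]finset.setUid -xyE set21.
by right.
Qed.

Section Drawing.
Variables (T : finType) (G : sgraph T) (p : T -> Defs.point).

Lemma simple_edge_vertices x y : simple_graph G -> gE G x y ->
  [/\ x \in gV G, y \in gV G & x != y].
Proof.
case=> _ irrG supG xy; have [xG yG] := supG _ _ xy; split=> //.
by apply: contraTneq xy => ->; rewrite irrG.
Qed.

Lemma drawing_east_free P t : simple_graph G ->
  (forall x, x \in gV G -> (p x).1 <= P.1) -> 0 < t ->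
  ~ drawing G p (lin P (east P) t).
Proof.
move=> sG leP t0 [u [v [uv [s /andP[s0 s1] /(congr1 fst) /=]]]].
have [/leP uP /leP vP _] := simple_edge_vertices sG uv.
nra.
Qed.

Lemma on_outer_region_east a P s :
  (forall t, s <= t -> ~ drawing G p (lin P (east P) t)) ->
  closure (connected_component (~` drawing G p)%classic (lin P (east P) s)) (p a) ->
  on_outer_region G p a.
Proof.
move=> eastP aC; exists (lin P (east P) s); split; first exact: eastP.
by split=> //; exact: unbounded_component_east.
Qed.

Lemma crossing_set2l x y x' y' u v : [set x; y] = [set x'; y'] ->
  crossing p x y u v -> crossing p x' y' u v.
Proof.
move=> xyE; have [[-> ->] // | [-> ->]] := set2_eq xyE.
case=> dis [z0 [segE [oz ov]]]; split; first by rewrite finset.setUC.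
by exists z0; rewrite seg_sym oseg_sym.
Qed.
End Drawing.

Lemma geo_1planar_emb_subgraph (T : finType) (G H : sgraph T) p :
  {subset gV H <= gV G} -> subrel (gE H) (gE G) ->
  geo_1planar_emb G p -> geo_1planar_emb H p.
Proof.
move=> HG eHG [[injG vG eG] oneG]; split; first split.
- by move=> x y /HG xG /HG yG; exact: injG.
- by move=> u v w /eHG uv /HG; exact: vG.
- by move=> u v x y /eHG uv /eHG; exact: eG.
- by move=> u v x y x' y' /eHG uv /eHG xy /eHG; exact: oneG.
Qed.

Lemma closure_component_connect (T : finType) (e : rel T) (p : T -> Defs.point)
    (A : set Defs.point) a w :
  (forall x y, e x y -> x != a -> y != a ->
     forall t, 0 <= t <= 1 -> A (lin (p x) (p y) t)) ->
  (forall x, e x a -> x != a -> forall t, 0 < t <= 1 -> A (lin (p a) (p x) t)) ->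
  A (p w) -> w != a -> connect e w a ->
  closure (connected_component A (p w)) (p a).
Proof.
move=> edgeA lastA Aw wa /connectP[s]; set C := connected_component A (p w).
suff walk x : C (p x) -> x != a -> path e x s -> a = last x s -> closure C (p a).
  exact: walk (connected_component_refl Aw) wa.
elim: s x => [|y s IH] x Cx xa /=; first by move=> _ ax; rewrite ax eqxx in xa.
case/andP=> xy ys lastE; have [ya|ya] := eqVneq y a.
  rewrite ya in xy; apply: closureS (closure_component_segment (lastA _ xy xa)).
  by move=> z; exact: connected_component_trans Cx.
apply: IH ys lastE => //; apply: connected_component_trans Cx _.
rewrite -[p x](lin0 _ (p y)) -[X in connected_component _ _ X](lin1 (p x)).
by apply: connected_component_subsegment => //; exact: edgeA.
Qed.

Definition uncrossed (T : finType) (p : T -> Defs.point) (G H : sgraph T) :=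
  forall x y u v, gE G x y -> gE H u v -> ~ crossing p x y u v.

Section Bouquet.
Variables (T : finType) (k : nat) (Gs : 'I_k -> sgraph T) (a : T).
Variable p : T -> Defs.point.
Hypothesis simple_Gs : forall i, simple_graph (Gs i).
Hypothesis meet_Gs : forall i j, i != j -> gV (Gs i) :&: gV (Gs j) = [set a].
Hypothesis emb_p : geo_1planar_emb (gunion Gs) p.

Lemma gunion_vertex i x : x \in gV (Gs i) -> x \in gV (gunion Gs).
Proof. by move=> xi; apply/bigcupP; exists i. Qed.

Lemma gunion_edge i x y : gE (Gs i) x y -> gE (gunion Gs) x y.
Proof. by move=> xy; apply/existsP; exists i. Qed.

Lemma common_vertex i j x : i != j ->
  x \in gV (Gs i) -> x \in gV (Gs j) -> x = a.
Proof.
move=> ij xi xj; apply/set1P; rewrite -(meet_Gs ij).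
by rewrite finset.in_setI xi xj.
Qed.

Lemma geo_1planar_emb_Gs i : geo_1planar_emb (Gs i) p.
Proof.
apply: geo_1planar_emb_subgraph emb_p; first exact: gunion_vertex.
exact: gunion_edge.
Qed.

Lemma exists_uncrossed i : (#|edges (Gs i)| < k.-1)%N ->
  exists2 j, j != i & uncrossed p (Gs i) (Gs j).
Proof.
move=> small; apply: contrapT => none.
have crossed j : exists e : {set T}, j != i -> exists x y u v,
    [/\ e = [set x; y], gE (Gs i) x y, gE (Gs j) u v & crossing p x y u v].
  have [->|ji] := eqVneq j i; first by exists finset.set0.
  apply: contrapT => nocross; apply: none; exists j => // x y u v xy uv xyuv.
  by apply: nocross; exists [set x; y] => _; exists x, y, u, v.
have [e eP] := choice crossed.
have inj_e : {in [set~ i] &, injective e}.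
  move=> j1 j2; rewrite !in_setC1 => j1i j2i e12; apply/eqP/contraT => j12.
  have [x1 [y1 [u1 [v1 [E1 xy1 uv1 c1]]]]] := eP j1 j1i.
  have [x2 [y2 [u2 [v2 [E2 xy2 uv2 c2]]]]] := eP j2 j2i.
  have {}c2 : crossing p x1 y1 u2 v2 by apply: crossing_set2l c2; rewrite -E1 -E2 e12.
  have [_ one_p] := emb_p.
  have uvE := one_p _ _ _ _ _ _ (gunion_edge xy1) (gunion_edge uv1) (gunion_edge uv2) c1 c2.
  have [u1j1 v1j1 uv1'] := simple_edge_vertices (simple_Gs j1) uv1.
  have [u2j2 v2j2 _] := simple_edge_vertices (simple_Gs j2) uv2.
  have shared z : z \in [set u1; v1] -> z \in gV (Gs j1) -> z = a.
    move=> zuv zj1; apply: (common_vertex j12 zj1).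
    by move: zuv; rewrite uvE => /set2P[] ->.
  by rewrite (shared u1 (set21 _ _) u1j1) (shared v1 (set22 _ _) v1j1) eqxx in uv1'.
have : (#|[set~ i]| <= #|edges (Gs i)|)%N.
  rewrite -(card_in_imset inj_e); apply: subset_leq_card.
  apply/fintype.subsetP => _ /imsetP[j ji ->]; rewrite in_setC1 in ji.
  have [x [y [u [v [-> xy _ _]]]]] := eP j ji.
  have [xi yi _] := simple_edge_vertices (simple_Gs i) xy.
  by apply/imset2P; exists x y => //; rewrite inE yi xy.
by rewrite cardsC1 card_ord; lia.
Qed.

Lemma vertex_off_drawing i j x : i != j -> x \in gV (Gs i) -> x != a ->
  ~ drawing (Gs j) p (p x).
Proof.
move=> ij xi xa [u [v [uv /seg_oseg]]].
have [[inj_p avoid_p _] _] := emb_p.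
have [uj vj _] := simple_edge_vertices (simple_Gs j) uv.
have off y : y \in gV (Gs j) -> p x <> p y.
  move=> yj /(inj_p _ _ (gunion_vertex xi) (gunion_vertex yj)) xy.
  by rewrite -xy in yj; rewrite (common_vertex ij xi yj) eqxx in xa.
case=> [/off|/off|]; [exact | exact |].
exact: avoid_p (gunion_edge uv) (gunion_vertex xi).
Qed.

Lemma edge_meets_drawing i j x y z : i != j -> uncrossed p (Gs i) (Gs j) ->
  gE (Gs i) x y -> y != a -> seg (p x) (p y) z -> drawing (Gs j) p z ->
  x = a /\ z = p a.
Proof.
move=> ij unc xy ya xyz [u [v [uv uvz]]].
have [[_ _ meet_p] _] := emb_p.
have [xi yi _] := simple_edge_vertices (simple_Gs i) xy.
have [uj vj _] := simple_edge_vertices (simple_Gs j) uv.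
have shared w : w \in gV (Gs j) -> w = y -> False.
  by move=> wj wy; subst w; rewrite (common_vertex ij yi wj) eqxx in ya.
have xyuv : [set x; y] != [set u; v].
  apply/eqP => xyE; have /set2P[] : y \in [set u; v] by rewrite -xyE set22.
    by move/esym; exact: shared uj.
  by move/esym; exact: shared vj.
case: (meet_p _ _ _ _ (gunion_edge xy) (gunion_edge uv) xyuv z xyz uvz);
  last by move=> /(unc _ _ _ _ xy uv).
case=> w; rewrite finset.in_setI => /andP[/set2P wxy /set2P wuv] ->.
have wa : w = a.
  apply: (common_vertex ij); first by case: wxy => ->.
  by case: wuv => ->.
subst w; split=> //; case: wxy => // ay.
by rewrite -ay eqxx in ya.
Qed.

Lemma on_outer_region_uncrossed i j w : i != j -> uncrossed p (Gs i) (Gs j) ->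
  gconnected (Gs i) -> a \in gV (Gs i) -> w \in gV (Gs i) -> w != a ->
  (forall t, 0 < t -> ~ drawing (Gs j) p (lin (p w) (east (p w)) t)) ->
  on_outer_region (Gs j) p a.
Proof.
move=> ij unc conn ai wi wa eastP.
have [[inj_p _ _] _] := emb_p.
apply: (@on_outer_region_east _ _ _ _ _ 0).
  move=> t; rewrite le_eqVlt => /orP[/eqP<-|]; last exact: eastP.
  by rewrite lin0; exact: vertex_off_drawing ij wi wa.
rewrite lin0; apply: closure_component_connect (conn _ _ wi ai) => //.
- move=> x y xy xa ya t t01 /(edge_meets_drawing ij unc xy ya (seg_lin _ _ t01)).
  by case=> /eqP; rewrite (negbTE xa).
- move=> x xa' xa t /andP[t0 t1].
  have [sym_i _ _] := simple_Gs i.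
  have ax : gE (Gs i) a x by rewrite sym_i.
  have t01 : 0 <= t <= 1 by rewrite ltW.
  move=> /(edge_meets_drawing ij unc ax xa (seg_lin _ _ t01)) [_].
  move=> /(lin_fixed (lt0r_neq0 t0)) /(inj_p _ _ _ _).
  have [xi _ _] := simple_edge_vertices (simple_Gs i) xa'.
  move=> /(_ (gunion_vertex xi) (gunion_vertex ai)) /eqP.
  by rewrite (negbTE xa).
- exact: vertex_off_drawing ij wi wa.
Qed.
End Bouquet.

Local Close Scope ring_scope.

Theorem mainTheorem11 (T : finType) (k m : nat) (Gs : 'I_k -> sgraph T) (a : T) :
  (forall i, simple_graph (Gs i)) ->
  (forall i, gconnected (Gs i)) ->
  (forall i, a \in gV (Gs i)) ->
  (forall i j, i != j -> gV (Gs i) :&: gV (Gs j) = [set a]) ->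
  (forall i, ~ outer_geometric_1planar (Gs i) a) ->
  (forall i, #|edges (Gs i)| <= m) ->
  m + 2 <= k ->
  ~ geometric_1planar (gunion Gs).
Proof.
move=> simple_Gs conn_Gs a_Gs meet_Gs not_outer small_Gs km [p emb_p].
have not_outer_p i : ~ on_outer_region (Gs i) p a.
  by move=> outer; apply: (not_outer i); exists p; split=> //; exact: geo_1planar_emb_Gs.
have i0 : 'I_k by apply: (@Ordinal _ 0); lia.
have aV : a \in gV (gunion Gs) := gunion_vertex (a_Gs i0).
case: (arg_maxP (fun x => (p x).1) aV) => w wV w_max.
have east_free j t : (0 < t)%R -> ~ drawing (Gs j) p (lin (p w) (east (p w)) t).
  apply: drawing_east_free => // x /(gunion_vertex (Gs := Gs)); exact: w_max.
have [wa|wa] := eqVneq w a.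
  apply: (not_outer_p i0); apply: (@on_outer_region_east _ _ _ _ _ 1%R).
    by move=> t /(lt_le_trans ltr01); exact: east_free.
  rewrite lin1 -wa; apply: closure_component_segment => t /andP[t0 _].
  exact: east_free.
have /bigcupP[i _ wi] := wV.
have [|j ji unc] := exists_uncrossed simple_Gs meet_Gs emb_p (i := i).
  by have := small_Gs i; lia.
have ij : i != j by rewrite eq_sym.
exact (not_outer_p j (on_outer_region_uncrossed simple_Gs meet_Gs emb_p ij unc
  (conn_Gs i) (a_Gs i) wi wa (east_free j))).
Qed.
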